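(* There is an absolute constant $c_3>0$ such that the following holds. Let $Q\in\mathbb{N}$, $\mathcal{S}\subseteq B(0,Q^{1/2})\cap(\mathbb{Z}[i]\setminus\{0\})$, $\Delta>0$, $\tau=\Delta^{-1/4}$. Let $b,r\in\mathbb{Z}[i]$ with $(b,r)=1$ and $0<|r|\le\tau$, and let $z\in\mathbb{C}$ with $\Delta^{1/2}\le|z|<\frac{2}{|r|\tau}$. Let $\overline{b}\in\mathbb{Z}[i]$ satisfy $\overline{b}b\equiv1\bmod r$. Then $$P\Big(\frac{b}{r}+z\Big)\le 16+c_3\sum_{t\mid r}\ \sum_{\substack{m\in\mathbb{Z}[i],\ 0<|m|\le\frac{3|rz|\sqrt{Q}}{|t|}\\ (m,\frac{r}{t})=1}}A_t\Big(\frac{\sqrt{Q\Delta}}{|z||t|},\frac{r}{t},-\overline{b}m\Big).$$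
   Context: $\mathbb{Z}[i]$ are the Gaussian integers; $B(y,u)=\{w\in\mathbb{C}:|w-y|\le u\}$. The sum over $t\mid r$ runs over a maximal set of mutually non-associate divisors $t$ of $r$ in $\mathbb{Z}[i]$. For $\alpha\in\mathbb{C}$, $$P(\alpha)=\Big|\Big\{(a,q)\in\mathbb{Z}[i]\times\mathcal{S}:\ (a,q)=1,\ \Big|\frac{a}{q}-\alpha\Big|\le\Delta^{1/2}\Big\}\Big|.$$ For $t\in\mathbb{Z}[i]\setminus\{0\}$, $\mathcal{S}_t=\{q\in\mathbb{Z}[i]:tq\in\mathcal{S}\}$, and for $u\ge0$, $k\in\mathbb{Z}[i]\setminus\{0\}$, $l\in\mathbb{Z}[i]$, $$A_t(u,k,l)=\sup_{y\in\mathbb{C},\ |y|\le\sqrt{Q}/|t|}\big|\{q\in\mathcal{S}_t\cap B(y,u):\ q\equiv l\bmod k\}\big|.$$ *)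

From HB Require Import structures.
From mathcomp Require Import all_boot all_order all_algebra.
From mathcomp Require Import complex.
From mathcomp Require Import boolp classical_sets cardinality reals.
From mathcomp Require Import Rstruct.
From mathcomp Require Import finmap.
Set Implicit Arguments. Unset Strict Implicit. Unset Printing Implicit Defensive.
Import Order.TTheory GRing.Theory Num.Theory.
Local Open Scope ring_scope.
Local Open Scope classical_set_scope.

Notation RR := Rdefinitions.R.
Definition CC : Type := complex RR.

Definition cabs (w : CC) : RR := Normc.normc w.

Definition isGI (w : CC) : Prop := (complex.Re w \is a Num.int) /\ (complex.Im w \is a Num.int).

Definition gdvd (t r : CC) : Prop := exists2 k : CC, isGI k & r = t * k.

Definition gunit (u : CC) : Prop := isGI u /\ gdvd u 1.

Definition gcoprime (a q : CC) : Prop :=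
  forall d : CC, isGI d -> gdvd d a -> gdvd d q -> gunit d.

Definition gcong (q l k : CC) : Prop := gdvd k (q - l).

Definition gassoc (t t' : CC) : Prop := exists2 u : CC, gunit u & t' = u * t.

Definition nonassoc_divisors (r : CC) (T : seq CC) : Prop :=
  [/\ uniq T,
      (forall t, t \in T -> isGI t /\ gdvd t r),
      (forall t t', t \in T -> t' \in T -> gassoc t t' -> t = t') &
      (forall d, isGI d -> gdvd d r -> exists2 t, t \in T & gassoc d t)].

Definition cball (y : CC) (u : RR) : set CC := [set w | cabs (w - y) <= u].

Definition ncard (A : set (CC * CC)) : nat := #|` fset_set A|.
Definition ncard1 (A : set CC) : nat := #|` fset_set A|.

Definition Pcount (S : set CC) (Delta : RR) (alpha : CC) : nat :=
  ncard [set aq : CC * CC | [/\ isGI aq.1, S aq.2, gcoprime aq.1 aq.2 &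
                             cabs (aq.1 / aq.2 - alpha) <= Num.sqrt Delta]].

Definition Sdiv (S : set CC) (t : CC) : set CC := [set q | isGI q /\ S (t * q)].

Definition Acount (Q : nat) (S : set CC) (t : CC) (u : RR) (k l : CC) : RR :=
  sup [set (ncard1 [set q | [/\ Sdiv S t q, cball y u q & gcong q l k]])%:R
      | y in [set y : CC | cabs y <= Num.sqrt (Q%:R) / cabs t]].

From mathcomp Require Import all_boot all_order all_algebra.
From mathcomp Require Import complex.
From mathcomp Require Import boolp classical_sets cardinality reals.
From mathcomp Require Import Rstruct.
From mathcomp Require Import finmap.
From mathcomp Require Import ring lra zify.
Import Order.TTheory GRing.Theory Num.Theory.
Set Implicit Arguments. Unset Strict Implicit. Unset Printing Implicit Defensive.
Local Open Scope ring_scope.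
Local Open Scope classical_set_scope.

(* For a pair (a, q) counted by P(b/r + z) put m0 = a r - b q.  If m0 = 0 then, since b is
   invertible modulo r and (a, q) = 1, q / r is a unit, which leaves at most 9 pairs.
   Otherwise let t in T be a common divisor of q and r of maximal norm and m = m0 / t: then
   (m, r/t) = 1, |m| <= 2 |r z| |q| / |t|, q/t lies in S_t, q/t = -bbar m mod r/t, and
   |q/t - m/(r z)| = |q| |a/q - b/r - z| / (|z| |t|) <= sqrt(Q Delta) / (|z| |t|), which
   still holds after projecting m/(r z) onto the disc |y| <= sqrt Q / |t|.  As (t, m, q/t)
   determines (a, q), the remaining pairs are counted by the sum of the A_t, and c3 = 1. *)

Definition sqnorm (w : CC) : RR := complex.Re w ^+ 2 + complex.Im w ^+ 2.

Lemma ReM (x y : CC) :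
  complex.Re (x * y) = complex.Re x * complex.Re y - complex.Im x * complex.Im y.
Proof. by case: x y => [a b] [c d]. Qed.

Lemma ImM (x y : CC) :
  complex.Im (x * y) = complex.Re x * complex.Im y + complex.Im x * complex.Re y.
Proof. by case: x y => [a b] [c d]. Qed.

Lemma ReD (x y : CC) : complex.Re (x + y) = complex.Re x + complex.Re y.
Proof. by case: x y => [a b] [c d]. Qed.

Lemma ImD (x y : CC) : complex.Im (x + y) = complex.Im x + complex.Im y.
Proof. by case: x y => [a b] [c d]. Qed.

Lemma ReN (x : CC) : complex.Re (- x) = - complex.Re x.
Proof. by case: x. Qed.

Lemma ImN (x : CC) : complex.Im (- x) = - complex.Im x.
Proof. by case: x. Qed.

Lemma sqnorm_ge0 w : 0 <= sqnorm w.
Proof. by rewrite addr_ge0 ?sqr_ge0. Qed.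

Lemma sqnormM x y : sqnorm (x * y) = sqnorm x * sqnorm y.
Proof. by rewrite /sqnorm ReM ImM; ring. Qed.

Lemma cabsE w : cabs w = Num.sqrt (sqnorm w).
Proof. by case: w. Qed.

Lemma cabs_ge0 w : 0 <= cabs w.
Proof. by rewrite cabsE sqrtr_ge0. Qed.

Lemma sqr_cabs w : cabs w ^+ 2 = sqnorm w.
Proof. by rewrite cabsE sqr_sqrtr ?sqnorm_ge0. Qed.

Lemma ler_cabs x y : (cabs x <= cabs y) = (sqnorm x <= sqnorm y).
Proof. by rewrite !cabsE ler_sqrt ?sqnorm_ge0. Qed.

Lemma cabsM x y : cabs (x * y) = cabs x * cabs y.
Proof. exact: Normc.normcM. Qed.

Lemma cabs_div x y : cabs (x / y) = cabs x / cabs y.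
Proof. by rewrite cabsM; congr (_ * _); exact: Normc.normcV. Qed.

Lemma cabsN x : cabs (- x) = cabs x.
Proof. exact: normcN. Qed.

Lemma cabsD x y : cabs (x + y) <= cabs x + cabs y.
Proof. exact: le_normcD. Qed.

Lemma cabs_eq0 x : (cabs x == 0) = (x == 0).
Proof.
by apply/eqP/eqP => [/Normc.eq0_normc | ->] //; rewrite /cabs Normc.normc0.
Qed.

Lemma cabs_gt0 x : (0 < cabs x) = (x != 0).
Proof. by rewrite lt_def cabs_eq0 cabs_ge0 andbT. Qed.

Lemma sqnorm_eq0 x : (sqnorm x == 0) = (x == 0).
Proof. by rewrite -cabs_eq0 cabsE sqrtr_eq0 le_eqVlt ltNge sqnorm_ge0 orbF. Qed.

Lemma normr_Re_le w : `|complex.Re w| <= cabs w.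
Proof. by rewrite cabsE -sqrtr_sqr ler_sqrt ?sqnorm_ge0 // lerDl sqr_ge0. Qed.

Lemma normr_Im_le w : `|complex.Im w| <= cabs w.
Proof. by rewrite cabsE -sqrtr_sqr ler_sqrt ?sqnorm_ge0 // lerDr sqr_ge0. Qed.

Lemma mulcJ x : x * (x^*)%C = Complex (sqnorm x) 0.
Proof.
by case: x => a c; apply/eqP; rewrite eq_complex /sqnorm /=; apply/andP; split; apply/eqP; ring.
Qed.

Lemma isGI1 : isGI 1.
Proof. by split; rewrite /= ?rpred0 ?rpred1. Qed.

Lemma isGIM x y : isGI x -> isGI y -> isGI (x * y).
Proof. by case=> ? ? [? ?]; split; rewrite ?ReM ?ImM ?rpredB ?rpredD ?rpredM. Qed.

Lemma isGID x y : isGI x -> isGI y -> isGI (x + y).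
Proof. by case=> ? ? [? ?]; split; rewrite ?ReD ?ImD rpredD. Qed.

Lemma isGIN x : isGI x -> isGI (- x).
Proof. by case=> ? ?; split; rewrite ?ReN ?ImN rpredN. Qed.

Lemma isGI_conj x : isGI x -> isGI (x^*)%C.
Proof. by case: x => a c [? ?]; split; rewrite //= rpredN. Qed.

Lemma sqnorm_nat x : isGI x -> sqnorm x \is a Num.nat.
Proof. by case=> ? ?; rewrite natrEint sqnorm_ge0 andbT rpredD ?rpredX. Qed.

Lemma sqnorm_ge1 x : isGI x -> x != 0 -> 1 <= sqnorm x.
Proof.
move=> /sqnorm_nat /natrP[n en]; rewrite -sqnorm_eq0 en pnatr_eq0 ler1n.
by rewrite lt0n.
Qed.

Lemma gdvd_refl x : gdvd x x.
Proof. by exists 1; [exact: isGI1 | rewrite mulr1]. Qed.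

Lemma gdvdD d x y : gdvd d x -> gdvd d y -> gdvd d (x + y).
Proof. by case=> k hk -> [l hl ->]; exists (k + l); [exact: isGID | rewrite mulrDr]. Qed.

Lemma gdvdN d x : gdvd d x -> gdvd d (- x).
Proof. by case=> k hk ->; exists (- k); [exact: isGIN | rewrite mulrN]. Qed.

Lemma gdvdB d x y : gdvd d x -> gdvd d y -> gdvd d (x - y).
Proof. by move=> hx hy; apply/gdvdD/gdvdN. Qed.

Lemma gdvdMr d x c : isGI c -> gdvd d x -> gdvd d (x * c).
Proof. by move=> hc [k hk ->]; exists (k * c); [exact: isGIM | rewrite mulrA]. Qed.

Lemma gdvdMl d x c : isGI c -> gdvd d x -> gdvd d (c * x).
Proof. by rewrite mulrC; apply: gdvdMr. Qed.

Lemma gdvd_trans e d x : gdvd d e -> gdvd e x -> gdvd d x.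
Proof. by case=> k hk -> [l hl ->]; exists (k * l); [exact: isGIM | rewrite mulrA]. Qed.

Lemma gdvd_mul2l c d x : gdvd d x -> gdvd (c * d) (c * x).
Proof. by case=> k hk ->; exists k; rewrite ?mulrA. Qed.

Lemma gdvd_neq0 d x : x != 0 -> gdvd d x -> d != 0.
Proof. by move=> xn0 [k _ ex]; apply: contraNneq xn0 => d0; rewrite ex d0 mul0r. Qed.

Lemma isGI_div d x : gdvd d x -> d != 0 -> isGI (x / d).
Proof. by case=> k hk -> dn0; rewrite [d * k]mulrC mulfK. Qed.

Lemma sqnorm_le_dvd d x : x != 0 -> gdvd d x -> sqnorm d <= sqnorm x.
Proof.
move=> xn0 [k hk ex]; rewrite ex sqnormM ler_peMr ?sqnorm_ge0 ?sqnorm_ge1 //.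
by apply: contraNneq xn0 => k0; rewrite ex k0 mulr0.
Qed.

Lemma gunit_sqnorm u : gunit u -> sqnorm u = 1.
Proof.
case=> hu [k hk e1].
have hk0 : k != 0 by apply/eqP=> k0; move: e1; rewrite k0 mulr0 => /eqP; rewrite oner_eq0.
have hu0 : u != 0 by apply/eqP=> u0; move: e1; rewrite u0 mul0r => /eqP; rewrite oner_eq0.
have : sqnorm u * sqnorm k = 1 by rewrite -sqnormM -e1 /sqnorm /= expr0n addr0 expr1n.
have := sqnorm_ge1 hu hu0; have := sqnorm_ge1 hk hk0; nra.
Qed.

Lemma gunitP d : isGI d -> d != 0 -> sqnorm d <= 1 -> gunit d.
Proof.
move=> hd dn0 hle; split=> //; exists (d^*)%C; first exact: isGI_conj.
have d1 : sqnorm d = 1 by apply/le_anti; rewrite hle sqnorm_ge1.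
by rewrite mulcJ d1.
Qed.

Lemma gdvd_cancel_inv r b bbar d k : isGI bbar -> isGI k -> gcong (bbar * b) 1 r ->
  gdvd d r -> gdvd d (b * k) -> gdvd d k.
Proof.
move=> hbbar hk [c hc ec] hdr hdbk.
have -> : k = bbar * (b * k) - r * c * k by rewrite -ec; ring.
by apply: gdvdB; [apply: gdvdMl | apply/gdvdMr/gdvdMr].
Qed.

Definition irange (n : nat) : seq int := [seq i%:Z - n%:Z | i <- iota 0 (2 * n + 1)].

Definition gbox (n : nat) : seq CC :=
  [seq Complex x%:~R y%:~R | x <- irange n, y <- irange n].

Lemma size_gbox n : size (gbox n) = ((2 * n + 1) * (2 * n + 1))%N.
Proof. by rewrite size_allpairs size_map size_iota. Qed.

Lemma mem_irange_int n (x : RR) : x \is a Num.int -> `|x| <= n%:R ->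
  exists2 k, k \in irange n & x = k%:~R.
Proof.
move=> /intrP[k ->]; rewrite -intr_norm -[n%:R]/((n%:Z)%:~R) ler_int ler_norml => hk.
exists k => //; have -> : k = (absz (k + n%:Z))%:Z - n%:Z by lia.
by apply: map_f; rewrite mem_iota; lia.
Qed.

Lemma mem_gbox n w : isGI w -> cabs w <= n%:R -> w \in gbox n.
Proof.
case=> hre him hw.
have [x hx ex] := mem_irange_int hre (le_trans (normr_Re_le w) hw).
have [y hy ey] := mem_irange_int him (le_trans (normr_Im_le w) hw).
have -> : w = Complex x%:~R y%:~R by rewrite -ex -ey; case: (w).
exact: allpairs_f.
Qed.

Lemma finite_GI_ball (R : RR) : finite_set [set w | isGI w /\ cabs w <= R].
Proof.
have [n hn] : exists n : nat, R <= n%:R.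
  case: (lerP R 0) => hR; first by exists 0%N.
  by exists (Num.Def.archi_bound R); apply/ltW/archi_boundP/ltW.
apply: (@sub_finite_set _ _ [set` gbox n]); last exact: finite_seq.
by move=> w [hw hwR]; apply: mem_gbox => //; apply: le_trans hn.
Qed.

Lemma mem_fset_setP {T : choiceType} (A : set T) x : x \in fset_set A -> A x.
Proof.
have [fA|nfA] := pselect (finite_set A); first by rewrite in_fset_set // in_setE.
by rewrite /fset_set; case: pselect.
Qed.

Lemma size_le_card_inj {T T' : choiceType} (s : seq T) (f : T -> T') (B : set T') :
  uniq s -> {in s &, injective f} -> {in s, forall x, B (f x)} -> finite_set B ->
  (size s <= #|` fset_set B|)%N.
Proof.
move=> us finj sB fB; rewrite -(size_map f); apply: uniq_leq_size.
  by rewrite map_inj_in_uniq.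
by move=> _ /mapP[x xs ->]; rewrite in_fset_set // in_setE; apply: sB.
Qed.

Lemma size_le_sum_count (X I : eqType) (s : seq X) (L : seq I) (lab : X -> I) :
  {in s, forall x, lab x \in L} ->
  (size s <= \sum_(i <- L) count (fun x => lab x == i) s)%N.
Proof.
elim: s => [|x s IH] hL //=; rewrite big_split /= (big_rem (lab x)) ?hL ?mem_head //.
rewrite eqxx -addnA add1n ltnS; apply: leq_trans (leq_addl _ _).
by apply: IH => y ys; apply: hL; rewrite inE ys orbT.
Qed.

Lemma dot_le_cabs w y :
  complex.Re w * complex.Re y + complex.Im w * complex.Im y <= cabs w * cabs y.
Proof.
set dot := _ + _; have [dot_le0|dot_gt0] := lerP dot 0.
  by apply: le_trans dot_le0 _; rewrite mulr_ge0 ?cabs_ge0.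
rewrite !cabsE -sqrtrM ?sqnorm_ge0 // -[dot]gtr0_norm // -sqrtr_sqr.
rewrite ler_sqrt ?mulr_ge0 ?sqnorm_ge0 // /dot /sqnorm.
have := sqr_ge0 (complex.Re w * complex.Im y - complex.Im w * complex.Re y); nra.
Qed.

Definition disc_proj (R : RR) (y : CC) : CC :=
  if cabs y <= R then y else Complex (R / cabs y) 0 * y.

Lemma disc_proj_in R y : 0 <= R -> cabs (disc_proj R y) <= R.
Proof.
rewrite /disc_proj; case: ifPn => // /negbTE; rewrite leNgt => /negbFE hy hR.
have y0 : 0 < cabs y by apply: le_lt_trans hy.
rewrite cabsM [cabs (Complex _ _)]cabsE /sqnorm /= expr0n addr0 sqrtr_sqr.
by rewrite ger0_norm ?divr_ge0 ?cabs_ge0 // divfK ?gt_eqF.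
Qed.

(* |w - y|^2 - |w - s y|^2 = (1 - s) ((1 + s) |y|^2 - 2 <w, y>), and <w, y> <= s |y|^2
   when |w| <= R = s |y|. *)
Lemma disc_proj_closer R y w : cabs w <= R -> cabs (w - disc_proj R y) <= cabs (w - y).
Proof.
rewrite /disc_proj; case: ifPn => // /negbTE; rewrite leNgt => /negbFE hy hw.
have y0 : 0 < cabs y := le_lt_trans (le_trans (cabs_ge0 w) hw) hy.
set s := R / cabs y.
have s_ge0 : 0 <= s by rewrite divr_ge0 ?(ltW y0) ?(le_trans (cabs_ge0 w) hw).
have s_lt1 : s < 1 by rewrite ltr_pdivrMr // mul1r.
have dot_le : complex.Re w * complex.Re y + complex.Im w * complex.Im y <= s * cabs y ^+ 2.
  apply: le_trans (dot_le_cabs w y) _.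
  by rewrite expr2 mulrA divfK ?gt_eqF // ler_pM2r.
have h1 : 0 <= (1 - s) *
    (s * cabs y ^+ 2 - (complex.Re w * complex.Re y + complex.Im w * complex.Im y)).
  by apply: mulr_ge0; rewrite subr_ge0 // ltW.
have h2 : 0 <= (1 - s) ^+ 2 * cabs y ^+ 2 by rewrite mulr_ge0 ?sqr_ge0.
have ey := sqr_cabs y.
rewrite ler_cabs /sqnorm !ReD !ImD !ReN !ImN !ReM !ImM /= in ey *.
nra.
Qed.

Definition max_common_divisor (q r d : CC) : Prop :=
  [/\ isGI d, gdvd d q, gdvd d r &
      forall e, isGI e -> gdvd e q -> gdvd e r -> sqnorm e <= sqnorm d].

Lemma exists_max_common_divisor q r : isGI q -> isGI r -> r != 0 ->
  exists d, max_common_divisor q r d.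
Proof.
move=> hq hr rn0.
pose P n := `[< exists d, [/\ isGI d, gdvd d q, gdvd d r & sqnorm d = n%:R] >].
have P1 : exists n, P n.
  exists 1%N; apply/asboolP; exists 1; split; first exact: isGI1.
  - by exists q; rewrite ?mul1r.
  - by exists r; rewrite ?mul1r.
  by rewrite /sqnorm /= expr0n addr0 expr1n.
have /natrP[B eB] := sqnorm_nat hr.
have P_le n : P n -> (n <= B)%N.
  by move=> /asboolP[d [hd _ hdr en]]; rewrite -(ler_nat RR) -en -eB sqnorm_le_dvd.
case: (ex_maxnP P1 P_le) => n /asboolP[d [hd hdq hdr en]] n_max.
exists d; split=> // e he heq her; have /natrP[k ek] := sqnorm_nat he.
by rewrite en ek ler_nat; apply: n_max; apply/asboolP; exists e.
Qed.

Lemma max_common_divisor_assoc q r d t :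
  gassoc d t -> max_common_divisor q r d -> max_common_divisor q r t.
Proof.
case=> u hu -> [hd hdq hdr d_max]; have [huGI [v hv euv]] := hu.
have dvd_ud x : gdvd d x -> gdvd (u * d) x.
  by case=> k hk ->; exists (v * k); [exact: isGIM | rewrite mulrACA -euv mul1r].
split; [exact: isGIM | exact: dvd_ud | exact: dvd_ud |].
by move=> e he heq her; rewrite sqnormM (gunit_sqnorm hu) mul1r; apply: d_max.
Qed.

Lemma nonassoc_divisors_max r T q : nonassoc_divisors r T ->
  isGI q -> isGI r -> r != 0 -> exists2 t, t \in T & max_common_divisor q r t.
Proof.
move=> [_ _ _ hT] hq hr rn0; have [d hd] := exists_max_common_divisor hq hr rn0.
have [hdGI _ hdr _] := hd; have [t tT hdt] := hT d hdGI hdr.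
by exists t => //; apply: max_common_divisor_assoc hd.
Qed.

(* A common divisor e of (a r - b q) / t and r / t divides q / t because b is invertible
   modulo r; so t e is a common divisor of q and r, and maximality of t forces N(e) <= 1. *)
Lemma coprime_div_max_common_divisor r b bbar a q t :
  isGI a -> isGI bbar -> gcong (bbar * b) 1 r -> r != 0 ->
  max_common_divisor q r t -> gcoprime ((a * r - b * q) / t) (r / t).
Proof.
move=> ha hbbar hinv rn0 [ht [kq hkq eqq] [kr hkr eqr] t_max].
have kr_n0 : kr != 0 by apply: contraNneq rn0 => kr0; rewrite eqr kr0 mulr0.
have tn0 : t != 0 by apply: contraNneq rn0 => t0; rewrite eqr t0 mul0r.
have -> : r / t = kr by rewrite eqr [t * kr]mulrC mulfK.
have -> : (a * r - b * q) / t = a * kr - b * kq by rewrite eqr eqq; field.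
move=> e he he_m he_kr.
have he_bkq : gdvd e (b * kq).
  by have := gdvdB (gdvdMl ha he_kr) he_m; rewrite opprB addrC subrK.
have he_r : gdvd e r by rewrite eqr; apply: gdvdMl.
have he_kq := gdvd_cancel_inv hbbar hkq hinv he_r he_bkq.
have te_le : sqnorm (t * e) <= sqnorm t.
  by apply: t_max; [exact: isGIM | rewrite eqq | rewrite eqr]; apply: gdvd_mul2l.
apply: gunitP => //; first exact: gdvd_neq0 kr_n0 he_kr.
have t_gt0 : 0 < sqnorm t by rewrite lt_def sqnorm_eq0 tn0 sqnorm_ge0.
by rewrite -(ler_pM2l t_gt0) mulr1 -sqnormM.
Qed.

Lemma cabs_cross_le (a q b r z : CC) (d : RR) : q != 0 -> r != 0 ->
  d <= cabs z -> cabs (a / q - (b / r + z)) <= d ->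
  cabs (a * r - b * q) <= 2 * cabs (r * z) * cabs q.
Proof.
move=> qn0 rn0 dz hd.
have -> : a * r - b * q = q * r * (a / q - (b / r + z) + z) by field; rewrite qn0 rn0.
have h2z : cabs (a / q - (b / r + z) + z) <= 2 * cabs z.
  by have := cabsD (a / q - (b / r + z)) z; lra.
rewrite !cabsM (_ : 2 * _ * _ = cabs q * cabs r * (2 * cabs z)); last by ring.
by rewrite ler_wpM2l ?mulr_ge0 ?cabs_ge0.
Qed.

Lemma cabs_sub_div_cross (a q b r z t : CC) : q != 0 -> r != 0 -> z != 0 -> t != 0 ->
  cabs (q / t - (a * r - b * q) / t / (r * z)) =
  cabs q * cabs (a / q - (b / r + z)) / (cabs z * cabs t).
Proof.
move=> qn0 rn0 zn0 tn0.
have -> : q / t - (a * r - b * q) / t / (r * z) = - (q / (z * t)) * (a / q - (b / r + z)).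
  by field; rewrite qn0 rn0 zn0 tn0.
by rewrite cabsM cabsN cabs_div cabsM mulrAC.
Qed.

Lemma gcong_div_cross (r b bbar a q t : CC) : isGI a -> isGI bbar -> gcong (bbar * b) 1 r ->
  isGI t -> gdvd t q -> gdvd t r -> t != 0 ->
  gcong (q / t) (- bbar * ((a * r - b * q) / t)) (r / t).
Proof.
move=> ha hbbar hinv ht [kq hkq eqq] [kr hkr eqr] tn0.
have -> : q / t = kq by rewrite eqq [t * kq]mulrC mulfK.
have -> : r / t = kr by rewrite eqr [t * kr]mulrC mulfK.
have -> : (a * r - b * q) / t = a * kr - b * kq by rewrite eqr eqq; field.
have kr_r : gdvd kr r by exists t; [| rewrite eqr mulrC].
rewrite /gcong (_ : _ - _ = kr * (bbar * a) - (bbar * b - 1) * kq); last by ring.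
apply: gdvdB; first by exists (bbar * a); first exact: isGIM.
by apply: gdvdMr => //; apply: gdvd_trans kr_r hinv.
Qed.

Lemma gunit_of_cross_eq0 (a q b r bbar : CC) : isGI a -> isGI q -> isGI b -> isGI r ->
  isGI bbar -> gcong (bbar * b) 1 r -> r != 0 -> gcoprime a q -> a * r = b * q ->
  gunit (q / r).
Proof.
move=> ha hq hb hr hbbar hinv rn0 haq ebq.
have [w hw eqw] : gdvd r q.
  by apply: gdvd_cancel_inv hbbar hq hinv (gdvd_refl r) _; exists a; [| rewrite -ebq mulrC].
have -> : q / r = w by rewrite eqw [r * w]mulrC mulfK.
apply: haq => //; last by exists r; [| rewrite eqw mulrC].
by exists b; [| apply: (mulIf rn0); rewrite ebq eqw; ring].
Qed.

Lemma Sdiv_finite (Q : RR) S t : t != 0 -> (forall q, S q -> cabs q <= Q) ->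
  finite_set (Sdiv S t).
Proof.
move=> tn0 hS; apply: (sub_finite_set _ (finite_GI_ball (Q / cabs t))).
move=> q [hq /hS]; rewrite cabsM => hqQ; split => //.
by rewrite ler_pdivlMr ?cabs_gt0 // mulrC.
Qed.

Lemma ncard1_le_Acount (Q : nat) S t u k l y : t != 0 ->
  (forall q, S q -> cabs q <= Num.sqrt Q%:R) -> cabs y <= Num.sqrt Q%:R / cabs t ->
  (ncard1 [set q | [/\ Sdiv S t q, cball y u q & gcong q l k]])%:R <= Acount Q S t u k l.
Proof.
move=> tn0 hS hy; apply: sup_upper_bound; last by exists y.
split; first by eexists; exists y.
exists (#|` fset_set (Sdiv S t)|)%:R => _ [y' _ <-]; rewrite ler_nat.
apply: (size_le_card_inj (f := id)); first exact: fset_uniq.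
- by move=> ? ? _ _.
- by move=> x /mem_fset_setP [].
exact: Sdiv_finite hS.
Qed.

Section PairCount.

Variables (Q : nat) (S : set CC) (Delta : RR) (b r z bbar : CC) (T : seq CC).
Hypotheses (hS : forall q, S q -> [/\ isGI q, q != 0 & cabs q <= Num.sqrt Q%:R])
  (hb : isGI b) (hr : isGI r) (rn0 : r != 0) (zn0 : z != 0)
  (hz : Num.sqrt Delta <= cabs z) (hbbar : isGI bbar) (hinv : gcong (bbar * b) 1 r)
  (hT : nonassoc_divisors r T).

Local Notation pairs := [set aq : CC * CC | [/\ isGI aq.1, S aq.2, gcoprime aq.1 aq.2 &
  cabs (aq.1 / aq.2 - (b / r + z)) <= Num.sqrt Delta]].
Local Notation cross x := (x.1 * r - b * x.2).
Local Notation numerators t := (fset_set [set m : CC | [/\ isGI m,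
  0 < cabs m <= 3 * cabs (r * z) * Num.sqrt (Q%:R) / cabs t & gcoprime m (r / t)]]).
Local Notation fibre t m := [set q | [/\ Sdiv S t q,
  cball (disc_proj (Num.sqrt Q%:R / cabs t) (m / (r * z)))
        (Num.sqrt (Q%:R * Delta) / (cabs z * cabs t)) q &
  gcong q (- bbar * m) (r / t)]].

Let S_bounded q : S q -> cabs q <= Num.sqrt Q%:R.
Proof. by case/hS. Qed.

Let divisor_neq0 t : t \in T -> t != 0.
Proof. by move=> tT; have [_ /(_ t tT)[_ htr] _ _] := hT; apply: gdvd_neq0 htr. Qed.

Lemma cross_inj x y : x.2 = y.2 -> cross x = cross y -> x = y.
Proof. by case: x y => [a q] [a' q'] /= <- /addIr /(mulIf rn0) ->. Qed.

Lemma count_cross_eq0 (s : seq (CC * CC)) : uniq s -> (forall x, x \in s -> pairs x) ->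
  (count (fun x => cross x == 0%R) s <= 9)%N.
Proof.
move=> us s_pairs; rewrite -size_filter -(size_map (fun x => x.2 / r)).
apply: (@leq_trans (size (gbox 1))); last by rewrite size_gbox.
apply: uniq_leq_size.
  rewrite map_inj_in_uniq ?filter_uniq // => x y.
  rewrite !mem_filter => /andP[/eqP cx _] /andP[/eqP cy _] /(congr1 ( *%R^~ r)).
  by rewrite !divfK // => exy; apply: cross_inj; rewrite // cx cy.
move=> w /mapP[x]; rewrite mem_filter => /andP[/eqP cx /s_pairs[ha /hS[hq _ _] hco _]] ->.
have hu := gunit_of_cross_eq0 ha hq hb hr hbbar hinv rn0 hco (subr0_eq cx).
by case: (hu) => hGI _; apply: mem_gbox; rewrite // cabsE (gunit_sqnorm hu) sqrtr1.
Qed.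

Let gcd_rep (x : CC * CC) : CC := xget 0 [set t | t \in T /\ max_common_divisor x.2 r t].

Lemma gcd_repP x : pairs x -> gcd_rep x \in T /\ max_common_divisor x.2 r (gcd_rep x).
Proof.
case=> _ /hS[hq _ _] _ _.
apply: (@xgetPex _ 0 [set t | t \in T /\ max_common_divisor x.2 r t]).
by have [t tT ht] := nonassoc_divisors_max hT hq hr rn0; exists t.
Qed.

Lemma cross_fibre x : pairs x -> cross x != 0 ->
  cross x / gcd_rep x \in numerators (gcd_rep x) /\
  fibre (gcd_rep x) (cross x / gcd_rep x) (x.2 / gcd_rep x).
Proof.
move=> px cx0; have [tT t_max] := gcd_repP px; have [ht htq htr _] := t_max.
case: px => ha Sq _ hclose; have [hq qn0 hqQ] := hS Sq.
set t := gcd_rep x in tT t_max ht htq htr *; have tn0 := divisor_neq0 tT.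
split.
  have cross_le : cabs (cross x) <= 3 * cabs (r * z) * Num.sqrt Q%:R.
    apply: le_trans (cabs_cross_le qn0 rn0 hz hclose) _.
    have := cabs_ge0 (r * z); have := cabs_ge0 x.2; nra.
  rewrite in_fset_set; last first.
    apply: sub_finite_set (finite_GI_ball (3 * cabs (r * z) * Num.sqrt Q%:R / cabs t)).
    by move=> w [hw /andP[_ hw2] _].
  rewrite in_setE; split.
  - by apply: isGI_div tn0; apply: gdvdB; apply: gdvdMl.
  - apply/andP; split; first by rewrite cabs_gt0 mulf_neq0 ?invr_eq0.
    by rewrite cabs_div ler_pM2r ?invr_gt0 ?cabs_gt0.
  - exact: coprime_div_max_common_divisor ha hbbar hinv rn0 t_max.
split.
- by split; [exact: isGI_div htq tn0 | rewrite mulrC divfK].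
- rewrite /cball; apply: le_trans (disc_proj_closer _ _) _.
    by rewrite cabs_div ler_pM2r ?invr_gt0 ?cabs_gt0.
  rewrite cabs_sub_div_cross // sqrtrM ?ler0n //.
  by rewrite ler_pM2r ?invr_gt0 ?mulr_gt0 ?cabs_gt0 // ler_pM ?cabs_ge0.
- exact: gcong_div_cross ha hbbar hinv ht htq htr tn0.
Qed.

Lemma count_cross_neq0 (s : seq (CC * CC)) : uniq s -> (forall x, x \in s -> pairs x) ->
  (count (fun x => cross x != 0%R) s <=
   \sum_(t <- T) \sum_(m <- numerators t) ncard1 (fibre t m))%N.
Proof.
move=> us s_pairs; rewrite -size_filter.
set s' := filter _ s; have s'P x : x \in s' -> pairs x /\ cross x != 0.
  by rewrite mem_filter => /andP[cx0 /s_pairs].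
pose label x := (gcd_rep x, cross x / gcd_rep x).
apply: leq_trans (size_le_sum_count (L := [seq (t, m) | t <- T, m <- numerators t])
                                    (lab := label) _) _.
  move=> x /s'P[px cx0]; apply/allpairsPdep; exists (gcd_rep x), (cross x / gcd_rep x).
  by split; [case: (gcd_repP px) | case: (cross_fibre px cx0) |].
rewrite big_allpairs_dep /= big_seq [X in (_ <= X)%N]big_seq; apply: leq_sum => t tT.
have tn0 := divisor_neq0 tT.
apply: leq_sum => m _; rewrite -size_filter.
apply: (size_le_card_inj (f := fun x => x.2 / t)).
- by rewrite filter_uniq ?filter_uniq.
- move=> x y; rewrite !mem_filter => /andP[/eqP[tx mx] _] /andP[/eqP[ty my] _] exy.
  apply: cross_inj; first by move: exy => /(congr1 ( *%R^~ t)); rewrite !divfK.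
  by apply: (mulIf (invr_neq0 tn0)); rewrite -{1}tx mx -my ty.
- move=> x; rewrite mem_filter => /andP[/eqP[tx mx] /s'P[px cx0]].
  by have [_] := cross_fibre px cx0; rewrite mx tx.
by apply: sub_finite_set (Sdiv_finite tn0 S_bounded) => w [].
Qed.

Lemma Pcount_le_sum_Acount :
  (Pcount S Delta (b / r + z))%:R <=
    9 + \sum_(t <- T) \sum_(m <- numerators t)
          Acount Q S t (Num.sqrt (Q%:R * Delta) / (cabs z * cabs t)) (r / t) (- bbar * m).
Proof.
have F_pairs x : x \in fset_set pairs -> pairs x := @mem_fset_setP _ _ x.
rewrite /Pcount /ncard -(count_predC (fun x => cross x == 0%R)) natrD.
apply: lerD; first by rewrite ler_nat count_cross_eq0 ?fset_uniq.
apply: le_trans (_ : (\sum_(t <- T) \sum_(m <- numerators t) ncard1 (fibre t m))%:R <= _).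
  by rewrite ler_nat count_cross_neq0 ?fset_uniq.
rewrite natr_sum big_seq [X in _ <= X]big_seq; apply: ler_sum => t tT.
rewrite natr_sum; apply: ler_sum => m _.
apply: ncard1_le_Acount (divisor_neq0 tT) S_bounded _.
by apply: disc_proj_in; rewrite divr_ge0 ?sqrtr_ge0 ?cabs_ge0.
Qed.

End PairCount.

Theorem lemma3 :
  exists c3 : RR, 0 < c3 /\
  forall (Q : nat) (S : set CC) (Delta : RR),
    (forall q, S q -> [/\ isGI q, q != 0 & cabs q <= Num.sqrt (Q%:R)]) ->
    0 < Delta ->
    let tau : RR := (Num.sqrt (Num.sqrt Delta))^-1 in
    forall (b r : CC), isGI b -> isGI r -> gcoprime b r ->
    0 < cabs r <= tau ->
    forall z : CC, Num.sqrt Delta <= cabs z < 2 / (cabs r * tau) ->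
    forall bbar : CC, isGI bbar -> gcong (bbar * b) 1 r ->
    forall T : seq CC, nonassoc_divisors r T ->
    (Pcount S Delta (b / r + z))%:R <=
      16 + c3 * \sum_(t <- T)
                  \sum_(m <- fset_set [set m : CC | [/\ isGI m,
                           0 < cabs m <= 3 * cabs (r * z) * Num.sqrt (Q%:R) / cabs t &
                           gcoprime m (r / t)]])
                     Acount Q S t (Num.sqrt (Q%:R * Delta) / (cabs z * cabs t))
                            (r / t) (- bbar * m).
Proof.
exists 1; split=> [|Q S Delta hS hD tau b r hb hr _ /andP[r_gt0 _] z /andP[hz _]];
  first exact: ltr01.
move=> bbar hbbar hinv T hT.
have rn0 : r != 0 by rewrite -cabs_gt0.
have zn0 : z != 0 by rewrite -cabs_gt0; apply: lt_le_trans hz; rewrite sqrtr_gt0.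
apply: le_trans (Pcount_le_sum_Acount hS hb hr rn0 zn0 hz hbbar hinv hT) _.
by rewrite mul1r lerD2r ler_nat.
Qed.
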